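(* As $n\to\infty$, \[ 2\log s(n,2) \sim \log p(n,2) \sim \log m(n,2). \]
   Context: For integers $0\le r\le n$, $m(n,r)$ denotes the number of matroids of rank $r$ on the fixed ground set $[n]=\{1,\dots,n\}$, $p(n,r)$ the number of those that are paving, and $s(n,r)$ the number of those that are sparse paving. A matroid of rank $r$ is paving if every circuit has cardinality at least $r$; it is sparse paving if both it and its dual are paving (equivalently, every $r$-subset of the ground set is either a basis or a circuit-hyperplane). $\log$ denotes the logarithm to base $2$, and $f\sim g$ means $f/g\to 1$. *)

From mathcomp Require Import all_boot.
From Stdlib Require Import Reals.

Set Implicit Arguments.
Unset Strict Implicit.
Unset Printing Implicit Defensive.

Definition is_matroid_bases (n : nat) (B : {set {set 'I_n}}) : bool :=
  (B != set0) &&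
  [forall B1 in B, forall B2 in B, forall x in B1 :\: B2,
     exists y in B2 :\: B1, (y |: (B1 :\ x)) \in B].

Definition has_rank (n : nat) (B : {set {set 'I_n}}) (r : nat) : bool :=
  [forall b in B, #|b| == r].

Definition indep (n : nat) (B : {set {set 'I_n}}) (X : {set 'I_n}) : bool :=
  [exists b in B, X \subset b].

Definition circuit (n : nat) (B : {set {set 'I_n}}) (C : {set 'I_n}) : bool :=
  ~~ indep B C && [forall x in C, indep B (C :\ x)].

Definition paving (n : nat) (B : {set {set 'I_n}}) (r : nat) : bool :=
  [forall C, circuit B C ==> (r <= #|C|)].

Definition dual_bases (n : nat) (B : {set {set 'I_n}}) : {set {set 'I_n}} :=
  [set ~: b | b in B].

Definition sparse_paving (n : nat) (B : {set {set 'I_n}}) (r : nat) : bool :=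
  paving B r && paving (dual_bases B) (n - r).

Definition m_count (n r : nat) : nat :=
  #|[set B : {set {set 'I_n}} | is_matroid_bases B && has_rank B r]|.
Definition p_count (n r : nat) : nat :=
  #|[set B : {set {set 'I_n}} | [&& is_matroid_bases B, has_rank B r & paving B r]]|.
Definition s_count (n r : nat) : nat :=
  #|[set B : {set {set 'I_n}} |
      [&& is_matroid_bases B, has_rank B r & sparse_paving B r]]|.

Definition log2 (x : R) : R := (ln x / ln 2)%R.

(* A rank-2 matroid is determined by its loops and by the partition of its
   non-loops into parallel classes: two non-loops form a basis exactly when
   they are not parallel. Recording a representative of the class of every
   element gives m(n,2) <= (n+1)^n. A sparse paving matroid of rank 2 has no
   loops and parallel classes of size at most two, so it is determined by a
   partial matching, whence s(n,2) <= 2^n (n+1)^(n/2).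
   Conversely, for any colouring of [n] with at least two colours the pairs of
   differently coloured elements are the bases of a paving matroid. Giving the
   first k elements distinct colours and colouring the others arbitrarily
   among them yields p(n,2) >= k^(n-k); matching the first h = n/2 elements
   with the next h by a permutation yields s(n,2) >= h!. Choosing k = n/M with
   M large shows that log p(n,2) and log m(n,2) are (1 + o(1)) n log n, while
   log s(n,2) is (1/2 + o(1)) n log n. *)

From mathcomp Require Import all_boot zify.
From Stdlib Require Import Reals Lra Psatz.
From Coquelicot Require Import Coquelicot.

(* The Stdlib imports rebind [^] on [nat] to [Nat.pow] and Coquelicot opens
   [R_scope]; restore the MathComp conventions. *)
Import ssrnat.
Open Scope nat_scope.

Set Implicit Arguments.
Unset Strict Implicit.
Unset Printing Implicit Defensive.

Lemma cards2_mem_other (T : finType) (b : {set T}) c :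
  #|b| = 2 -> c \in b -> exists2 x, x != c & b = [set c; x].
Proof.
move=> /eqP /cards2P [u [v [uv ->]]] /set2P [->|->].
  by exists v; rewrite // eq_sym.
by exists u; rewrite // setUC.
Qed.

Section RankTwo.

Variable n : nat.
Implicit Types (B : {set {set 'I_n}}) (x y z : 'I_n).

Definition nonloop B x : bool := [exists b in B, x \in b].

Definition parallel B x y : bool :=
  [&& nonloop B x, nonloop B y & [set x; y] \notin B].

Lemma card_basis_rank2 B b : has_rank B 2 -> b \in B -> #|b| = 2.
Proof. by move=> /forall_inP rkB /rkB /eqP. Qed.

Lemma set1_notin_rank2 B x : has_rank B 2 -> [set x] \notin B.
Proof. by move=> rkB; apply/negP => /(card_basis_rank2 rkB); rewrite cards1. Qed.

Lemma mem_bases_rank2 B X : has_rank B 2 ->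
  (X \in B) = [exists x, exists y, (X == [set x; y]) && ([set x; y] \in B)].
Proof.
move=> rkB; apply/idP/idP => [XB | /existsP [x /existsP [y /andP [/eqP -> //]]]].
have /eqP /cards2P [x [y [_ defX]]] := card_basis_rank2 rkB XB.
by apply/existsP; exists x; apply/existsP; exists y; rewrite -defX XB eqxx.
Qed.

Lemma basis_nonloop B x y : [set x; y] \in B -> nonloop B x && nonloop B y.
Proof.
by move=> xyB; apply/andP; split; apply/exists_inP; exists [set x; y];
  rewrite // !inE eqxx ?orbT.
Qed.

Section Exchange.

Variable B : {set {set 'I_n}}.
Hypotheses (matB : is_matroid_bases B) (rkB : has_rank B 2).

Lemma rank2_exchange a b c : [set a; b] \in B -> nonloop B c ->
  c != a -> c != b -> ([set c; a] \in B) || ([set c; b] \in B).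
Proof.
move: matB => /andP [_ /forall_inP exchB] abB /exists_inP [b0 b0B cb0] ca cb.
have [x xc defb0] := cards2_mem_other (card_basis_rank2 rkB b0B) cb0.
have [xa | xa] := eqVneq x a; first by rewrite -xa -defb0 b0B.
have [xb | xb] := eqVneq x b; first by rewrite -xb -defb0 b0B orbT.
have xb0 : x \in b0 :\: [set a; b] by rewrite inE defb0 !inE eqxx orbT !negb_or xa xb.
have /forall_inP /(_ _ abB) /forall_inP /(_ _ xb0) := exchB _ b0B.
case/exists_inP => y; rewrite inE => /andP [_ yab].
have -> : b0 :\ x = [set c] by rewrite defb0 setUC setU1K // inE.
by rewrite setUC; case/set2P: yab => <- ->; rewrite ?orbT.
Qed.

Lemma parallel_refl x : nonloop B x -> parallel B x x.
Proof. by move=> nlx; rewrite /parallel nlx setUid set1_notin_rank2. Qed.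

Lemma parallel_sym x y : parallel B x y = parallel B y x.
Proof. by rewrite /parallel setUC andbCA andbA. Qed.

Lemma parallel_trans y x z : parallel B x y -> parallel B y z -> parallel B x z.
Proof.
move=> /and3P [nlx nly xy_dep] /and3P [_ nlz yz_dep].
rewrite /parallel nlx nlz /=.
have [<- | xz] := eqVneq x z; first by rewrite setUid set1_notin_rank2.
have [<- // | yx] := eqVneq y x.
have [yz | yz] := eqVneq y z; first by rewrite yz in xy_dep.
apply/negP => /rank2_exchange /(_ nly yx yz).
by rewrite setUC (negbTE xy_dep) (negbTE yz_dep).
Qed.

Definition class_code : {ffun 'I_n -> option 'I_n} :=
  [ffun x => if nonloop B x then [pick z | parallel B x z] else None].

Lemma class_codeP x : nonloop B x -> exists2 z, class_code x = Some z & parallel B x z.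
Proof.
move=> nlx; rewrite ffunE nlx; case: pickP => [z xz | none]; first by exists z.
by have := none x; rewrite parallel_refl.
Qed.

Lemma class_code_parallel x y : parallel B x y -> class_code x = class_code y.
Proof.
move=> xy; have /and3P [nlx nly _] := xy.
rewrite !ffunE nlx nly; apply: eq_pick => z; apply/idP/idP => [xz | yz].
  by apply: parallel_trans xz; rewrite parallel_sym.
exact: parallel_trans yz.
Qed.

Lemma set2_basis_class_code x y : ([set x; y] \in B) =
  [&& class_code x != None, class_code y != None & class_code x != class_code y].
Proof.
have [nlx | loopx] := boolP (nonloop B x); last first.
  rewrite ffunE (negbTE loopx); apply/negP => /basis_nonloop.
  by rewrite (negbTE loopx).
have [nly | loopy] := boolP (nonloop B y); last first.
  rewrite [class_code y]ffunE (negbTE loopy) andbF; apply/negP => /basis_nonloop.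
  by rewrite (negbTE loopy) andbF.
have [zx codex xzx] := class_codeP nlx; have [zy codey yzy] := class_codeP nly.
rewrite codex codey /=; apply/idP/idP => [xyB | ].
  apply/negP => /eqP [ez]; have : parallel B x y.
    by apply: parallel_trans xzx _; rewrite ez parallel_sym.
  by rewrite /parallel xyB !andbF.
apply: contraR => xy_dep; have xy : parallel B x y by rewrite /parallel nlx nly.
by have := class_code_parallel xy; rewrite codex codey => ->.
Qed.

End Exchange.

Lemma class_code_inj B1 B2 :
  is_matroid_bases B1 -> has_rank B1 2 -> is_matroid_bases B2 -> has_rank B2 2 ->
  class_code B1 = class_code B2 -> B1 = B2.
Proof.
move=> mat1 rk1 mat2 rk2 codeE; apply/setP => X.
rewrite (mem_bases_rank2 X rk1) (mem_bases_rank2 X rk2).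
apply: eq_existsb => x; apply: eq_existsb => y.
by rewrite !set2_basis_class_code // codeE.
Qed.

End RankTwo.

Lemma m_count_le n : m_count n 2 <= n.+1 ^ n.
Proof.
rewrite /m_count; set S := [set B | _].
rewrite -(@card_in_imset _ _ (@class_code n) S).
  by apply: leq_trans (max_card _) _; rewrite card_ffun card_option !card_ord.
by move=> B1 B2; rewrite !inE => /andP [mat1 rk1] /andP [mat2 rk2]; apply: class_code_inj.
Qed.

Section Paving.

Variable n : nat.
Implicit Types (B : {set {set 'I_n}}) (x y z : 'I_n).

Lemma dependent_contains_circuit B D :
  ~~ indep B D -> exists2 C : {set 'I_n}, C \subset D & circuit B C.
Proof.
elim: {D}#|D|.+1 {-2}D (ltnSn #|D|) => // k IH D ltDk depD.
have [circD | ] := boolP (circuit B D); first by exists D.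
rewrite /circuit depD /= => /forall_inPn [x xD depDx].
have [|C CDx circC] := IH (D :\ x) _ depDx; first by move: ltDk; rewrite (cardsD1 x D) xD.
by exists C => //; apply: subset_trans CDx (subD1set _ _).
Qed.

Lemma paving_dependent_card B r D : paving B r -> ~~ indep B D -> r <= #|D|.
Proof.
move=> /forallP pavB /dependent_contains_circuit [C CD circC].
by apply: leq_trans (subset_leq_card CD); have := pavB C; rewrite circC.
Qed.

Lemma paving2_nonloop B x : paving B 2 -> nonloop B x.
Proof.
move=> pavB; apply: contraT => loopx.
suff /(paving_dependent_card pavB) : ~~ indep B [set x] by rewrite cards1.
apply: contra loopx => /exists_inP [b bB]; rewrite sub1set => xb.
by apply/exists_inP; exists b.
Qed.

Lemma indep_dual B D : indep (dual_bases B) D = [exists b in B, D \subset ~: b].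
Proof.
apply/exists_inP/exists_inP => [[_ /imsetP [b bB ->] Db] | [b bB Db]].
  by exists b.
by exists (~: b) => //; apply: imset_f.
Qed.

(* The complement of three pairwise parallel elements contains no cobasis, so
   it is a dependent set of size n - 3 in the paving dual of rank n - 2. *)
Lemma sparse_parallel_unique B x y z :
  is_matroid_bases B -> has_rank B 2 -> sparse_paving B 2 ->
  parallel B x y -> parallel B x z -> x != y -> x != z -> y = z.
Proof.
move=> matB rkB /andP [_ pav_dual] xy xz neq_xy neq_xz.
apply/eqP; apply: contraT => neq_yz.
set T := [set x; y; z].
have T_parallel u v : u \in T -> v \in T -> parallel B u v.
  have x_parallel w : w \in T -> parallel B x w.
    rewrite !inE => /orP [/orP [] | ] /eqP -> //.
    by apply: parallel_refl; case/and3P: xy.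
  move=> uT vT; apply: (parallel_trans matB rkB) (x_parallel _ vT).
  by rewrite parallel_sym //; apply: x_parallel.
have dep_CT : ~~ indep (dual_bases B) (~: T).
  rewrite indep_dual; apply/exists_inP => -[b bB]; rewrite setCS => bT.
  have /eqP /cards2P [u [v [_ defb]]] := card_basis_rank2 rkB bB.
  have uT : u \in T by apply: (subsetP bT); rewrite defb !inE eqxx.
  have vT : v \in T by apply: (subsetP bT); rewrite defb !inE eqxx orbT.
  by have := T_parallel _ _ uT vT; rewrite /parallel -defb bB !andbF.
have card_CT : n - 2 <= #|~: T| := paving_dependent_card pav_dual dep_CT.
have := cardsC T; rewrite card_ord.
have : 2 < #|T|.
  apply/card_gt2P; exists x, y, z; rewrite !inE !eqxx ?orbT.
  by split => //; split => //; rewrite eq_sym.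
lia.
Qed.

Lemma paving2_of_nonloops B : B != set0 -> (forall x, nonloop B x) -> paving B 2.
Proof.
move=> /set0Pn [b0 b0B] nlB; apply/forallP => C; apply/implyP => /andP [depC _].
rewrite leqNgt; apply: contra depC => small_C; apply/exists_inP.
have : (#|C| == 0) || (#|C| == 1) by move: small_C; case: #|C| => [|[|]].
case/orP => [/eqP /cards0_eq -> | /cards1P [x ->]].
  by exists b0; rewrite ?sub0set.
by case/exists_inP: (nlB x) => b bB xb; exists b; rewrite // sub1set.
Qed.

Lemma dual_paving_of_triples B :
  (forall T : {set 'I_n}, 2 < #|T| -> exists2 b, b \in B & b \subset T) ->
  paving (dual_bases B) (n - 2).
Proof.
move=> triplesB; apply/forallP => C; apply/implyP => /andP [depC _].
rewrite leqNgt; apply: contra depC => small_C.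
have [|b bB bCC] := triplesB (~: C).
  by have := cardsC C; rewrite card_ord; lia.
by rewrite indep_dual; apply/exists_inP; exists b; rewrite // -setCS setCK.
Qed.

End Paving.

Lemma ord_neq_of_lt n (x y : 'I_n) : x < y -> x != y.
Proof. by move=> xy; rewrite -val_eqE ltn_eqF. Qed.

Section SparseCode.

Variable n : nat.
Implicit Types (B : {set {set 'I_n}}) (x y : 'I_n).

Definition lower_ends B := [set x : 'I_n | [exists y : 'I_n, (x < y) && parallel B x y]].
Definition upper_ends B := [set y : 'I_n | [exists x : 'I_n, (x < y) && parallel B x y]].
Definition partner_above B x := [pick y : 'I_n | (x < y) && parallel B x y].

Definition sparse_code B : {set 'I_n} * (n./2).-tuple (option 'I_n) :=
  (lower_ends B,
   [tuple nth None (map (partner_above B) (enum (lower_ends B))) i | i < n./2]).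

Section OneMatroid.

Variable B : {set {set 'I_n}}.
Hypotheses (matB : is_matroid_bases B) (rkB : has_rank B 2)
  (spB : sparse_paving B 2).

Lemma parallel_partner_above x y : x < y -> parallel B x y -> partner_above B x = Some y.
Proof.
move=> lt_xy xy; rewrite /partner_above; case: pickP => [y' /andP [lt_xy' xy'] | none].
  congr Some; apply: sparse_parallel_unique matB rkB spB xy' xy _ (ord_neq_of_lt lt_xy).
  exact: ord_neq_of_lt.
by have := none y; rewrite lt_xy xy.
Qed.

Lemma lower_endsP x : x \in lower_ends B ->
  exists2 y : 'I_n, x < y & parallel B x y /\ partner_above B x = Some y.
Proof.
rewrite inE => /existsP [y /andP [lt_xy xy]].
by exists y => //; split => //; apply: parallel_partner_above.
Qed.

(* Parallel pairs are disjoint, and each lower end is matched with a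
   distinct upper end. *)
Lemma card_lower_ends : #|lower_ends B| <= n./2.
Proof.
have disj : lower_ends B :&: upper_ends B = set0.
  apply/setP => x; rewrite in_setI in_set0; apply/andP => -[/lower_endsP [y lt_xy [xy _]]].
  rewrite inE => /existsP [w /andP [lt_wx wx]]; rewrite parallel_sym in wx.
  have yw : y = w.
    apply: sparse_parallel_unique matB rkB spB xy wx (ord_neq_of_lt lt_xy) _.
    by rewrite eq_sym ord_neq_of_lt.
  by move: lt_xy lt_wx; rewrite yw; lia.
have le_lower_upper : #|lower_ends B| <= #|upper_ends B|.
  pose g x := odflt x (partner_above B x).
  rewrite -(@card_in_imset _ _ g (lower_ends B)).
    apply: subset_leq_card; apply/subsetP => _ /imsetP [x /lower_endsP [y lt_xy [xy py]] ->].
    by rewrite /g py inE; apply/existsP; exists x; rewrite lt_xy xy.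
  move=> x1 x2 /lower_endsP [y1 lt1 [xy1 py1]] /lower_endsP [y2 lt2 [xy2 py2]].
  rewrite /g py1 py2 /= => y12.
  rewrite -y12 in xy2 lt2; rewrite parallel_sym in xy1; rewrite parallel_sym in xy2.
  by apply: sparse_parallel_unique matB rkB spB xy1 xy2 _ _; rewrite eq_sym ord_neq_of_lt.
have := cardsUI (lower_ends B) (upper_ends B); rewrite disj cards0 addn0.
have : #|lower_ends B :|: upper_ends B| <= n by rewrite -[n in _ <= n]card_ord max_card.
rewrite geq_half_double -addnn; lia.
Qed.

Lemma set2_basis_sparse x y : x != y -> ([set x; y] \in B) = ~~ parallel B x y.
Proof. by move: spB => /andP [pavB _] _; rewrite /parallel !paving2_nonloop //= negbK. Qed.

End OneMatroid.

Lemma sparse_code_parallel B1 B2 x y :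
  is_matroid_bases B1 -> has_rank B1 2 -> sparse_paving B1 2 ->
  sparse_code B1 = sparse_code B2 -> x < y -> parallel B1 x y -> parallel B2 x y.
Proof.
move=> mat1 rk1 sp1 codeE lt_xy xy1.
have lowerE : lower_ends B1 = lower_ends B2 by have := congr1 fst codeE.
have x_low : x \in lower_ends B1 by rewrite inE; apply/existsP; exists y; rewrite lt_xy xy1.
have ix : index x (enum (lower_ends B1)) < n./2.
  by apply: leq_trans (card_lower_ends mat1 rk1 sp1); rewrite cardE index_mem mem_enum.
have := congr1 (fun c => tnth c.2 (Ordinal ix)) codeE; rewrite /= !tnth_mktuple -lowerE.
rewrite !(nth_map x) ?index_mem ?mem_enum // nth_index ?mem_enum //.
rewrite (parallel_partner_above mat1 rk1 sp1 lt_xy xy1) /partner_above.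
by case: pickP => [z /andP [_ xz] [->] // | _].
Qed.

Lemma sparse_code_inj B1 B2 :
  is_matroid_bases B1 -> has_rank B1 2 -> sparse_paving B1 2 ->
  is_matroid_bases B2 -> has_rank B2 2 -> sparse_paving B2 2 ->
  sparse_code B1 = sparse_code B2 -> B1 = B2.
Proof.
move=> mat1 rk1 sp1 mat2 rk2 sp2 codeE.
have parallelE x y : x != y -> parallel B1 x y = parallel B2 x y.
  have lt_parallelE x' y' : x' < y' -> parallel B1 x' y' = parallel B2 x' y'.
    move=> lt; apply/idP/idP; first exact: sparse_code_parallel codeE lt.
    exact: sparse_code_parallel (esym codeE) lt.
  case: (ltngtP x y) => [lt _ | lt _ | /val_inj -> /eqP //]; first exact: lt_parallelE.
  by rewrite parallel_sym [parallel B2 _ _]parallel_sym lt_parallelE.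
apply/setP => X; rewrite (mem_bases_rank2 X rk1) (mem_bases_rank2 X rk2).
apply: eq_existsb => x; apply: eq_existsb => y.
have [<- | xy] := eqVneq x y; first by rewrite setUid !(negbTE (set1_notin_rank2 _ _)).
by rewrite !set2_basis_sparse // parallelE.
Qed.

End SparseCode.

Lemma s_count_le n : s_count n 2 <= 2 ^ n * n.+1 ^ n./2.
Proof.
rewrite /s_count; set S := [set B | _].
rewrite -(@card_in_imset _ _ (@sparse_code n) S).
  apply: leq_trans (max_card _) _.
  have card_sets : #|{set 'I_n}| = 2 ^ n.
    by rewrite -cardsT -powersetT card_powerset cardsT card_ord.
  by rewrite card_prod card_tuple card_option card_sets card_ord.
move=> B1 B2; rewrite !inE => /and3P [mat1 rk1 sp1] /and3P [mat2 rk2 sp2].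
exact: sparse_code_inj.
Qed.

Section Colourings.

Variable n : nat.
Implicit Types (c : 'I_n -> nat) (x y : 'I_n).

Definition colour_bases c : {set {set 'I_n}} :=
  [set X | [exists x, exists y, (c x != c y) && (X == [set x; y])]].

Lemma mem_colour_bases c x y : ([set x; y] \in colour_bases c) = (c x != c y).
Proof.
rewrite inE; apply/existsP/idP => [[u /existsP [v /andP [cuv /eqP uvE]]] | cxy]; last first.
  by exists x; apply/existsP; exists y; rewrite cxy eqxx.
have : u \in [set x; y] by rewrite uvE !inE eqxx.
have : v \in [set x; y] by rewrite uvE !inE eqxx orbT.
have /set2P [->|->] : x \in [set u; v] by rewrite -uvE !inE eqxx.
  have /set2P [->|-> //] : y \in [set u; v] by rewrite -uvE !inE eqxx orbT.
  by rewrite !inE => /orP [] /eqP vu; rewrite vu eqxx in cuv.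
have /set2P [-> _ _|->] : y \in [set u; v] by rewrite -uvE !inE eqxx orbT.
  by rewrite eq_sym.
by rewrite !inE => _ /orP [] /eqP uv; rewrite uv eqxx in cuv.
Qed.

Lemma colour_bases_rank c : has_rank (colour_bases c) 2.
Proof.
apply/forall_inP => X; rewrite inE => /existsP [x /existsP [y /andP [cxy /eqP ->]]].
suff xy : x != y by rewrite cards2 xy.
by apply: contraNneq cxy => ->.
Qed.

Lemma colour_bases_exchange c a b u v : c a != c b -> c u != c v -> a \notin [set u; v] ->
  [exists y in [set u; v] :\: [set a; b], (y |: ([set a; b] :\ a)) \in colour_bases c].
Proof.
move=> cab cuv a_uv; have ab : a != b by apply: contraNneq cab => ->.
rewrite setU1K ?inE //; apply/exists_inP.
have [cub | cub] := eqVneq (c u) (c b).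
  exists v; last by rewrite -/([set v; b]) mem_colour_bases -cub eq_sym.
  rewrite !inE eqxx orbT andbT negb_or; apply/andP; split.
    by apply: contraNneq a_uv => <-; rewrite !inE eqxx orbT.
  by apply: contraNneq cuv => ->; rewrite cub.
exists u; last by rewrite -/([set u; b]) mem_colour_bases.
rewrite !inE eqxx andbT negb_or; apply/andP; split.
  by apply: contraNneq a_uv => <-; rewrite !inE eqxx.
by apply: contraNneq cub => ->.
Qed.

Section TwoColours.

Variables (c : 'I_n -> nat) (a b : 'I_n).
Hypothesis cab : c a != c b.

Lemma colour_bases_matroid : is_matroid_bases (colour_bases c).
Proof.
apply/andP; split; first by apply/set0Pn; exists [set a; b]; rewrite mem_colour_bases.
apply/forall_inP => B1; rewrite inE => /existsP [a1 /existsP [b1 /andP [c1 /eqP ->]]].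
apply/forall_inP => B2; rewrite inE => /existsP [u /existsP [v /andP [c2 /eqP ->]]].
apply/forall_inP => x; rewrite inE => /andP [x_uv /set2P [|] x_ab]; rewrite x_ab in x_uv *.
  exact: colour_bases_exchange.
rewrite [[set a1; b1]]setUC; apply: colour_bases_exchange; by rewrite // eq_sym.
Qed.

Lemma colour_bases_nonloop x : nonloop (colour_bases c) x.
Proof.
have [cxa | cxa] := eqVneq (c x) (c a).
  by apply/exists_inP; exists [set x; b]; rewrite ?mem_colour_bases ?cxa // !inE eqxx.
by apply/exists_inP; exists [set x; a]; rewrite ?mem_colour_bases // !inE eqxx.
Qed.

Lemma colour_bases_paving :
  [&& is_matroid_bases (colour_bases c), has_rank (colour_bases c) 2
    & paving (colour_bases c) 2].
Proof.
rewrite colour_bases_matroid colour_bases_rank /=.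
apply: paving2_of_nonloops colour_bases_nonloop.
by case/andP: colour_bases_matroid.
Qed.

End TwoColours.

Definition extend_colouring k (t : seq nat) (i : 'I_n) : nat :=
  if i < k then val i else nth (val i) t (i - k).

Lemma extend_colouring_paving k t : 2 <= k <= n ->
  [&& is_matroid_bases (colour_bases (extend_colouring k t)),
      has_rank (colour_bases (extend_colouring k t)) 2
    & paving (colour_bases (extend_colouring k t)) 2].
Proof.
case/andP => k2 kn; have n0 : 0 < n by lia.
have n1 : 1 < n by lia.
apply: (colour_bases_paving (a := Ordinal n0) (b := Ordinal n1)).
by rewrite /extend_colouring /= !ifT //; lia.
Qed.

Lemma extend_colouring_inj k (t1 t2 : seq nat) :
  k + size t1 <= n -> size t1 = size t2 ->
  all (fun v => v < k) t1 -> all (fun v => v < k) t2 ->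
  colour_bases (extend_colouring k t1) = colour_bases (extend_colouring k t2) -> t1 = t2.
Proof.
move=> t1n size12 t1k t2k basesE; apply: (eq_from_nth (x0 := 0)) => // j j_t1.
apply/eqP; apply: contraT => neq12.
have jn : k + j < n by lia.
have t1jk : nth 0 t1 j < k by apply: (all_nthP 0 t1k).
have t1jn : nth 0 t1 j < n by lia.
have := mem_colour_bases (extend_colouring k t1) (Ordinal jn) (Ordinal t1jn).
rewrite basesE mem_colour_bases /extend_colouring /= t1jk ltnNge leq_addr /= addKn.
by rewrite !(set_nth_default 0) -?size12 // eqxx eq_sym (negbTE neq12).
Qed.

Lemma extend_colouring_collision k t x y : uniq t -> all (fun v => v < k) t ->
  extend_colouring k t x = extend_colouring k t y -> x != y -> (x < k) != (y < k).
Proof.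
move=> t_uniq tk; rewrite /extend_colouring.
have nth_lt z : z - k < size t -> nth z t (z - k) < k.
  by move=> zt; rewrite (set_nth_default 0) //; apply: (all_nthP 0 tk).
case: (ltnP x k) => xk; case: (ltnP y k) => yk //=; first by move=> /val_inj ->; rewrite eqxx.
case: (ltnP (x - k) (size t)) => xt; case: (ltnP (y - k) (size t)) => yt.
- rewrite !(set_nth_default 0) // => /eqP; rewrite nth_uniq // => /eqP xy.
  suff -> : x = y by rewrite eqxx.
  by apply: ord_inj; lia.
- by rewrite (nth_default _ yt) => xyE; have := nth_lt _ xt; rewrite xyE; lia.
- by rewrite (nth_default _ xt) => xyE; have := nth_lt _ yt; rewrite -xyE; lia.
- by rewrite (nth_default _ xt) (nth_default _ yt) => /val_inj ->; rewrite eqxx.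
Qed.

(* With injective [t], colour classes have at most two elements: one below
   [k] and one above. Hence every triple contains a basis. *)
Lemma extend_colouring_sparse k t : 2 <= k <= n -> uniq t -> all (fun v => v < k) t ->
  sparse_paving (colour_bases (extend_colouring k t)) 2.
Proof.
move=> kn t_uniq tk; have /and3P [_ _ pav] := extend_colouring_paving t kn.
rewrite /sparse_paving pav /=; apply: dual_paving_of_triples => T.
case/card_gt2P => x [y [z [[xT yT zT] [xy yz zx]]]].
have pairT u v : u \in T -> v \in T -> [set u; v] \subset T.
  by move=> uT vT; apply/subsetP => w; rewrite !inE => /orP [] /eqP ->.
set c := extend_colouring k t.
have [cxy | cxy] := eqVneq (c x) (c y); last by exists [set x; y]; rewrite ?mem_colour_bases ?pairT.
have [cyz | cyz] := eqVneq (c y) (c z); last by exists [set y; z]; rewrite ?mem_colour_bases ?pairT.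
have [czx | czx] := eqVneq (c z) (c x); last by exists [set z; x]; rewrite ?mem_colour_bases ?pairT.
have := extend_colouring_collision t_uniq tk cxy xy.
have := extend_colouring_collision t_uniq tk cyz yz.
have := extend_colouring_collision t_uniq tk czx zx.
by case: (x < k); case: (y < k); case: (z < k).
Qed.

End Colourings.

Lemma pow_le_fact k h : k <= h -> k ^ (h - k) <= h`!.
Proof.
elim: h => [|h IH] kh; first by move: kh; rewrite leqn0 => /eqP ->.
case: (ltngtP k h.+1) => [lt_kh | gt_kh | ->]; last by rewrite subnn expn0 fact_gt0.
  by rewrite subSn // expnS factS; apply: leq_mul; [lia | exact: IH].
lia.
Qed.

Lemma p_count_le_m_count n : p_count n 2 <= m_count n 2.
Proof. by apply: subset_leq_card; apply/subsetP => B; rewrite !inE => /and3P [-> ->]. Qed.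

Lemma p_count_ge_pow n k : 2 <= k <= n -> k ^ (n - k) <= p_count n 2.
Proof.
move=> kn.
pose F (g : (n - k).-tuple 'I_k) := colour_bases (extend_colouring (n := n) k (map val g)).
have gk (g : (n - k).-tuple 'I_k) : all (fun v => v < k) (map val g).
  by apply/allP => v /mapP [w _ ->]; apply: ltn_ord.
have F_inj : injective F.
  move=> g1 g2 /extend_colouring_inj F12; apply/val_inj/(inj_map val_inj).
  by apply: F12; rewrite ?size_map ?size_tuple //; lia.
rewrite -[k in k ^ _]card_ord -card_tuple -(card_imset _ F_inj).
apply: subset_leq_card; apply/subsetP => B /imsetP [g _ ->].
by rewrite inE extend_colouring_paving.
Qed.

(* Element [h + i] is made parallel to element [f i] for a permutation [f]
   of ['I_h]. *)
Lemma s_count_ge_fact n h : 2 <= h -> h + h <= n -> h`! <= s_count n 2.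
Proof.
move=> h2 hn; have hkn : 2 <= h <= n by lia.
pose t (f : {ffun 'I_h -> 'I_h}) := [seq val (f j) | j <- enum 'I_h].
pose F f := colour_bases (extend_colouring (n := n) h (t f)).
have th f : all (fun v => v < h) (t f) by apply/allP => v /mapP [w _ ->]; apply: ltn_ord.
have size_t f : size (t f) = h by rewrite size_map size_enum_ord.
have F_inj : injective F.
  move=> f1 f2 /extend_colouring_inj F12.
  have /eq_in_map t12 : t f1 = t f2.
    by apply: F12; rewrite ?th ?size_t //; lia.
  by apply/ffunP => j; apply/val_inj/t12; rewrite mem_enum.
have card_inj : #|[set f : {ffun 'I_h -> 'I_h} | injectiveb f]| = h`!.
  by rewrite card_inj_ffuns card_ord ffactnn.
rewrite -card_inj -(card_imset _ F_inj).
apply: subset_leq_card; apply/subsetP => B /imsetP [f]; rewrite inE => /injectiveP f_inj ->.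
have t_uniq : uniq (t f) by rewrite map_inj_uniq ?enum_uniq // => a b /val_inj /f_inj.
have /and3P [mat rk _] := extend_colouring_paving (t f) hkn.
by rewrite inE mat rk extend_colouring_sparse.
Qed.

Lemma m_count_ge_pow n k : 2 <= k <= n -> k ^ (n - k) <= m_count n 2.
Proof. by move=> kn; apply: leq_trans (p_count_ge_pow kn) (p_count_le_m_count n). Qed.

Lemma p_count_le n : p_count n 2 <= n.+1 ^ n.
Proof. exact: leq_trans (p_count_le_m_count n) (m_count_le n). Qed.

Lemma s_count_ge_pow n k : 2 <= k <= n./2 -> k ^ (n./2 - k) <= s_count n 2.
Proof.
case/andP => k2 kh; apply: leq_trans (pow_le_fact kh) (s_count_ge_fact _ _); first lia.
by rewrite addnn -geq_half_double.
Qed.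

Open Scope R_scope.

Lemma ln_INR_le (a b : nat) : (0 < a)%N -> (a <= b)%N -> ln (INR a) <= ln (INR b).
Proof. by move=> a0 ab; apply: ln_le; [apply/lt_0_INR/ltP | apply/le_INR/leP]. Qed.

Lemma ln_INR_gt0 (n : nat) : (2 <= n)%N -> 0 < ln (INR n).
Proof.
move=> n2; rewrite -ln_1; apply: ln_increasing; first lra.
by apply: (@Rlt_le_trans _ (INR 2)); [simpl; lra | apply/le_INR/leP].
Qed.

Lemma INR_expn (a e : nat) : INR (a ^ e) = INR a ^ e.
Proof. by elim: e => [|e IH] //; rewrite expnS mult_INR IH. Qed.

Lemma ln_INR_expn (a e : nat) : (0 < a)%N -> ln (INR (a ^ e)) = INR e * ln (INR a).
Proof. by move=> a0; rewrite INR_expn ln_pow //; apply/lt_0_INR/ltP. Qed.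

Lemma ln_INR_succ_le (n : nat) : (1 <= n)%N -> ln (INR n.+1) <= ln (INR n) + ln 2.
Proof.
move=> n1; have rn : 1 <= INR n by apply/(le_INR 1)/leP.
rewrite S_INR -ln_mult; [apply: ln_le|..]; lra.
Qed.

(* Take [k = a / M]: then [a - k >= a (1 - 1/M)] and [k >= a / (2 M)]. *)
Lemma ln_ge_of_pow_bounds (x a M : nat) : (1 <= M)%N -> (2 * M <= a)%N ->
  (forall k, (2 <= k <= a)%N -> (k ^ (a - k) <= x)%N) ->
  INR a * (1 - / INR M) * (ln (INR a) - ln (2 * INR M)) <= ln (INR x).
Proof.
move=> M1 aM pow_le_x; set k := (a %/ M)%N.
have k2 : (2 <= k)%N by rewrite -(mulnK 2 M1) leq_div2r.
have ka : (k <= a)%N by apply: leq_div.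
have rkM : INR k * INR M <= INR a by rewrite -mult_INR; apply/le_INR/leP/leq_divM.
have raM : INR a <= INR k * (2 * INR M).
  have : (a < k.+1 * M)%N by apply: ltn_ceil; lia.
  move=> /ltP /lt_INR; rewrite mult_INR S_INR.
  have : 2 <= INR k by apply/(le_INR 2)/leP.
  nra.
have rM : 1 <= INR M by apply/(le_INR 1)/leP.
have ra : 2 * INR M <= INR a by rewrite -[2]/(INR 2) -mult_INR; apply/le_INR/leP.
have rk : 0 < INR k by apply/lt_0_INR/ltP; lia.
apply: (Rle_trans _ (INR (a - k) * ln (INR k))); last first.
  rewrite -ln_INR_expn; last lia.
  by apply: ln_INR_le; [rewrite expn_gt0; lia | apply: pow_le_x; lia].
rewrite minus_INR; last by apply/leP.
apply: Rmult_le_compat.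
- apply: Rmult_le_pos; first lra.
  have : / INR M <= 1 by rewrite -Rinv_1; apply: Rinv_le_contravar; lra.
  lra.
- by have := ln_le (2 * INR M) (INR a); lra.
- have : INR k <= INR a * / INR M.
    by apply: (Rmult_le_reg_r (INR M)); [lra | rewrite Rmult_assoc Rinv_l; lra].
  lra.
- have := ln_le (INR a) (INR k * (2 * INR M)); rewrite ln_mult; lra.
Qed.

Lemma is_lim_seq_ln_INR : is_lim_seq (fun n => ln (INR n)) p_infty.
Proof. exact: (filterlim_comp _ _ _ INR ln _ _ _ is_lim_seq_INR is_lim_ln_p). Qed.

Lemma is_lim_seq_plus_div_ln (a b : R) : is_lim_seq (fun n => a + b / ln (INR n)) a.
Proof.
have lim_inv : is_lim_seq (fun n => / ln (INR n)) 0.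
  exact: (is_lim_seq_inv _ p_infty is_lim_seq_ln_INR).
have := is_lim_seq_plus' _ _ _ _ (is_lim_seq_const a) (is_lim_seq_scal_l _ b _ lim_inv).
by rewrite /= Rmult_0_r Rplus_0_r.
Qed.

Lemma is_lim_seq_squeeze_family (u v : nat -> R) (l : R) : 0 <= l ->
  is_lim_seq v l -> eventually (fun n => u n <= v n) ->
  (forall M : nat, (1 <= M)%N -> exists2 w : nat -> R,
     is_lim_seq w (l * (1 - / INR M)) & eventually (fun n => w n <= u n)) ->
  is_lim_seq u l.
Proof.
move=> l0 lim_v le_uv lower; apply/is_lim_seq_spec => eps.
have [M lM] := INR_archimed (eps / 2) l ltac:(move: (cond_pos eps); lra).
have [w lim_w le_wu] := lower M.+1 isT.
have rM : 0 < INR M.+1 by apply/lt_0_INR/ltP.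
have small : l * / INR M.+1 < eps / 2.
  apply: (Rmult_lt_reg_r (INR M.+1)) => //.
  rewrite Rmult_assoc Rinv_l; last lra.
  by rewrite S_INR; have := cond_pos eps; nra.
move/is_lim_seq_spec: lim_w => /(_ (pos_div_2 eps)) near_w.
move/is_lim_seq_spec: lim_v => /(_ eps) near_v.
apply: (filter_imp _ _ _
  (filter_and _ _ near_v (filter_and _ _ near_w (filter_and _ _ le_uv le_wu)))).
move=> n [/Rabs_def2 vn [/Rabs_def2 wn [uv wu]]].
have lM1 : l * (1 - / INR M.+1) = l - l * / INR M.+1 by ring.
change (pos (pos_div_2 eps)) with (eps / 2) in wn; rewrite lM1 in wn.
apply: Rabs_def1; lra.
Qed.

Definition scaled_ln (x : nat -> nat) (n : nat) : R := ln (INR (x n)) / (INR n * ln (INR n)).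

Lemma INR_mul_ln_gt0 (n : nat) : (2 <= n)%N -> 0 < INR n * ln (INR n).
Proof. by move=> n2; apply: Rmult_lt_0_compat; [apply/lt_0_INR/ltP; lia | apply: ln_INR_gt0]. Qed.

Lemma scaled_ln_le (x : nat -> nat) n a b : (2 <= n)%N ->
  ln (INR (x n)) <= INR n * (a * ln (INR n) + b) -> scaled_ln x n <= a + b / ln (INR n).
Proof.
move=> n2 le_x; have lnn := ln_INR_gt0 n2.
rewrite /scaled_ln Rle_div_l; last exact: INR_mul_ln_gt0.
by have -> : (a + b / ln (INR n)) * (INR n * ln (INR n)) = INR n * (a * ln (INR n) + b)
  by field; lra.
Qed.

Lemma scaled_ln_ge (x : nat -> nat) n a b : (2 <= n)%N ->
  INR n * (a * ln (INR n) + b) <= ln (INR (x n)) -> a + b / ln (INR n) <= scaled_ln x n.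
Proof.
move=> n2 ge_x; have lnn := ln_INR_gt0 n2.
rewrite /scaled_ln -Rle_div_r; last exact: INR_mul_ln_gt0.
by have -> : (a + b / ln (INR n)) * (INR n * ln (INR n)) = INR n * (a * ln (INR n) + b)
  by field; lra.
Qed.

Lemma is_lim_seq_scaled_ln (x : nat -> nat) (l c : R) : 0 <= l ->
  eventually (fun n => ln (INR (x n)) <= INR n * (l * ln (INR n) + c)) ->
  (forall M : nat, (1 <= M)%N -> exists c' : R, eventually (fun n =>
     INR n * (l * (1 - / INR M) * ln (INR n) + c') <= ln (INR (x n)))) ->
  is_lim_seq (scaled_ln x) l.
Proof.
move=> l0 [N upper] lower.
apply: (is_lim_seq_squeeze_family (v := fun n => l + c / ln (INR n))) => //.
- exact: is_lim_seq_plus_div_ln.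
- exists (maxn 2 N) => n /leP; rewrite geq_max => /andP [n2 /leP nN].
  exact: scaled_ln_le n2 (upper n nN).
- move=> M M1; have [c' [N' lowerM]] := lower M M1.
  exists (fun n => l * (1 - / INR M) + c' / ln (INR n)); first exact: is_lim_seq_plus_div_ln.
  exists (maxn 2 N') => n /leP; rewrite geq_max => /andP [n2 /leP nN].
  exact: scaled_ln_ge n2 (lowerM n nN).
Qed.

Lemma INR_half_bounds (n : nat) : 2 * INR n./2 <= INR n <= 2 * INR n./2 + 1.
Proof.
have : (n./2.*2 <= n)%N by rewrite -geq_half_double.
have : (n <= n./2.*2.+1)%N by rewrite -leq_half_double.
rewrite -!mul2n => /leP /le_INR + /leP /le_INR.
by rewrite S_INR !mult_INR; simpl; lra.
Qed.

Lemma ln_le_of_le_pow_succ (x n : nat) : (0 < x)%N -> (1 <= n)%N ->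
  (x <= n.+1 ^ n)%N -> ln (INR x) <= INR n * (1 * ln (INR n) + ln 2).
Proof.
move=> x0 n1 x_le; apply: Rle_trans (ln_INR_le x0 x_le) _.
rewrite ln_INR_expn // Rmult_1_l; apply: Rmult_le_compat_l; first exact: pos_INR.
exact: ln_INR_succ_le.
Qed.

Lemma ln_le_of_le_sparse_bound (x n : nat) : (0 < x)%N -> (1 <= n)%N ->
  (x <= 2 ^ n * n.+1 ^ n./2)%N -> ln (INR x) <= INR n * (/ 2 * ln (INR n) + 3 / 2 * ln 2).
Proof.
move=> x0 n1 x_le; apply: Rle_trans (ln_INR_le x0 x_le) _.
rewrite mult_INR ln_mult ?INR_expn; try by apply: pow_lt; apply/lt_0_INR/ltP.
rewrite -!INR_expn !ln_INR_expn //; change (INR 2) with 2.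
have := ln_INR_succ_le n1; have := INR_half_bounds n; have := pos_INR n./2.
have := ln_INR_le (a := 1) isT n1; have := @ln_INR_gt0 2 isT; rewrite ln_1.
change (INR 2) with 2; nra.
Qed.

Lemma ln_ge_half_of_pow_bounds (x n M : nat) : (1 <= M)%N -> (12 * M <= n)%N ->
  (forall k, (2 <= k <= n./2)%N -> (k ^ (n./2 - k) <= x)%N) ->
  INR n * (/ 2 * (1 - / INR M) * ln (INR n) + - (/ 2 * (1 - / INR M) * ln (12 * INR M)))
    <= ln (INR x).
Proof.
move=> M1 nM x_ge.
have M2 : (1 <= 2 * M)%N by lia.
have hM : (2 * (2 * M) <= n./2)%N by rewrite geq_half_double -mul2n; lia.
apply: Rle_trans (ln_ge_of_pow_bounds M2 hM x_ge).
rewrite !mult_INR; change (INR 2) with 2.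
have rM : 1 <= INR M by apply/(le_INR 1)/leP.
have rnM : 12 * INR M <= INR n.
  have -> : 12 = INR 12 by rewrite INR_IZR_INZ.
  by rewrite -mult_INR; apply/le_INR/leP.
have [hn nh] := INR_half_bounds n.
set r := / INR M.
have rM1 : r * INR M = 1 by apply: Rinv_l; lra.
have r0 : 0 < r by apply: Rinv_0_lt_compat; lra.
have r1 : r <= 1 by rewrite /r -Rinv_1; apply: Rinv_le_contravar; lra.
have -> : / (2 * INR M) = r / 2 by rewrite /r; field; lra.
have B0 : 0 <= ln (INR n) - ln (12 * INR M) by have := ln_le (12 * INR M) (INR n); lra.
have BA : ln (INR n) - ln (12 * INR M) <= ln (INR n./2) - ln (2 * (2 * INR M)).
  have ln_n : ln (INR n) <= ln 3 + ln (INR n./2) by rewrite -ln_mult; [apply: ln_le|..]; lra.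
  rewrite (_ : 12 * INR M = 3 * (2 * (2 * INR M))); last ring.
  rewrite ln_mult; lra.
have coef : INR n * (/ 2 * (1 - r)) <= INR n./2 * (1 - r / 2).
  have : 12 <= r * INR n by nra.
  nra.
have -> : INR n * (/ 2 * (1 - r) * ln (INR n) + - (/ 2 * (1 - r) * ln (12 * INR M))) =
  INR n * (/ 2 * (1 - r)) * (ln (INR n) - ln (12 * INR M)) by ring.
apply: Rmult_le_compat coef BA => //.
by apply: Rmult_le_pos; [apply: pos_INR | lra].
Qed.

Lemma is_lim_seq_scaled_ln_one (x : nat -> nat) :
  (forall n k, (2 <= k <= n)%N -> (k ^ (n - k) <= x n)%N) ->
  (forall n, (x n <= n.+1 ^ n)%N) ->
  is_lim_seq (scaled_ln x) 1.
Proof.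
move=> x_ge x_le; apply: (is_lim_seq_scaled_ln (c := ln 2)) => [|| M M1]; first lra.
- exists 2%N => n /leP n2; apply: ln_le_of_le_pow_succ (x_le n); last lia.
  by apply: leq_trans (x_ge n 2%N _); rewrite ?expn_gt0 //; lia.
- exists (- ((1 - / INR M) * ln (2 * INR M))), (2 * M)%N => n /leP nM.
  apply: Rle_trans (ln_ge_of_pow_bounds M1 nM (x_ge n)); right; ring.
Qed.

Lemma is_lim_seq_scaled_ln_half (x : nat -> nat) :
  (forall n k, (2 <= k <= n./2)%N -> (k ^ (n./2 - k) <= x n)%N) ->
  (forall n, (x n <= 2 ^ n * n.+1 ^ n./2)%N) ->
  is_lim_seq (scaled_ln x) (/ 2).
Proof.
move=> x_ge x_le.
apply: (is_lim_seq_scaled_ln (c := 3 / 2 * ln 2)) => [|| M M1]; first lra.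
- exists 4%N => n /leP n4; apply: ln_le_of_le_sparse_bound (x_le n); last lia.
  by apply: leq_trans (x_ge n 2%N _); rewrite ?expn_gt0 // leqnn geq_half_double; lia.
- exists (- (/ 2 * (1 - / INR M) * ln (12 * INR M))), (12 * M)%N => n /leP nM.
  exact: ln_ge_half_of_pow_bounds M1 nM (x_ge n).
Qed.

Lemma Rdiv_div_cancel_r (a b c : R) : c <> 0 -> a / c / (b / c) = a / b.
Proof.
move=> c0; rewrite /Rdiv Rinv_mult Rinv_inv.
by rewrite (Rmult_comm (/ b)) Rmult_assoc -(Rmult_assoc (/ c)) Rinv_l // Rmult_1_l.
Qed.

Lemma scaled_ln_div (x y : nat -> nat) n : (2 <= n)%N ->
  scaled_ln x n / scaled_ln y n = log2 (INR (x n)) / log2 (INR (y n)).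
Proof.
move=> n2; rewrite /scaled_ln /log2 !Rdiv_div_cancel_r //.
  by apply: Rgt_not_eq; exact: (@ln_INR_gt0 2 isT).
by apply: Rgt_not_eq; apply: INR_mul_ln_gt0.
Qed.

Theorem theorem1p1 :
  Un_cv (fun n : nat => (2 * log2 (INR (s_count n 2)) / log2 (INR (p_count n 2)))%R) 1%R /\
  Un_cv (fun n : nat => (log2 (INR (p_count n 2)) / log2 (INR (m_count n 2)))%R) 1%R.
Proof.
have lim_m := is_lim_seq_scaled_ln_one (x := m_count^~ 2%N) m_count_ge_pow m_count_le.
have lim_p := is_lim_seq_scaled_ln_one (x := p_count^~ 2%N) p_count_ge_pow p_count_le.
have lim_s := is_lim_seq_scaled_ln_half (x := s_count^~ 2%N) s_count_ge_pow s_count_le.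
split; apply/is_lim_seq_Reals.
- have := is_lim_seq_div' _ _ _ _ (is_lim_seq_scal_l _ 2 _ lim_s) lim_p R1_neq_R0.
  rewrite (_ : 2 * / 2 / 1 = 1); last field.
  apply: is_lim_seq_ext_loc; exists 2%N => n /leP n2.
  by rewrite /Rdiv !(Rmult_assoc 2); congr (2 * _); apply: scaled_ln_div.
- have := is_lim_seq_div' _ _ _ _ lim_p lim_m R1_neq_R0; rewrite Rdiv_1_r.
  apply: is_lim_seq_ext_loc; exists 2%N => n /leP n2.
  exact: scaled_ln_div.
Qed.
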